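(* Let $(M,J,g)$ be a $2n$-dimensional Kähler manifold which is an asymptotic harmonic manifold up to order 2, with constants $\Lambda_1,\Lambda_2$. Then $$\Lambda_1^2-\frac{2(n+1)^2}{n+7}\Lambda_2\le 0,$$ and equality holds if and only if $M$ has constant holomorphic sectional curvature $\frac{\tau}{n(n+1)}$.
   Context: Conventions: $R(X,Y)Z=[\nabla_X,\nabla_Y]Z-\nabla_{[X,Y]}Z$; components w.r.t. a local orthonormal frame, $R_{abcd}=g(R(e_a,e_b)e_c,e_d)$, $\rho_{ij}=R_{aija}$, $\tau=\rho_{aa}$, summation over repeated indices. For $x=\xi^ie_i\in T_pM$ write $R_{axxb}=R_{aijb}\xi^i\xi^j$. A Riemannian manifold is an asymptotic harmonic manifold up to order 2 if there are real constants $\Lambda_1,\Lambda_2$ (independent of the point) such that for every $p\in M$ and every $x\in T_pM$: $R_{axxa}=\Lambda_1|x|^2$ and $R_{axxb}R_{bxxa}=\Lambda_2|x|^4$. *)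

(* Pointwise (algebraic) model of the curvature data of a
   Kaehler manifold, expressed in components w.r.t. a local orthonormal frame
   e_0,...,e_{2n-1} at each point p : M. *)
From HB Require Import structures.
From mathcomp Require Import all_boot all_order all_algebra.
Set Implicit Arguments. Unset Strict Implicit. Unset Printing Implicit Defensive.
Import Order.TTheory GRing.Theory Num.Theory.
Local Open Scope ring_scope.

Section Curv.
Variables (R : realFieldType) (N : nat).

(* Rm a b c d = R_{abcd} = g(R(e_a,e_b)e_c,e_d) *)
Definition curv := 'I_N -> 'I_N -> 'I_N -> 'I_N -> R.
Definition vec := 'I_N -> R.

Definition norm2 (x : vec) : R := \sum_i x i ^+ 2.

Definition curv4 (Rm : curv) (x y z w : vec) : R :=
  \sum_a \sum_b \sum_c \sum_d Rm a b c d * x a * y b * z c * w d.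

Definition Raxxb (Rm : curv) (x : vec) (a b : 'I_N) : R :=
  \sum_i \sum_j Rm a i j b * x i * x j.

Definition scal (Rm : curv) : R := \sum_a \sum_i Rm a i i a.

(* J acting on x: (Jx)^k = J_{kl} x^l, with J e_l = sum_k J_{kl} e_k *)
Definition Japp (J : 'M[R]_N) (x : vec) : vec := fun k => \sum_l J k l * x l.

Definition is_curvature_tensor (Rm : curv) : Prop :=
  [/\ forall a b c d, Rm a b c d = - Rm b a c d,
      forall a b c d, Rm a b c d = - Rm a b d c,
      forall a b c d, Rm a b c d = Rm c d a b &
      forall a b c d, Rm a b c d + Rm b c a d + Rm c a b d = 0].

Definition is_hermitian_cs (J : 'M[R]_N) : Prop :=
  J *m J = - 1%:M /\ J^T *m J = 1%:M.

(* Kaehler identity R(X,Y)JZ = J R(X,Y)Z, i.e. R(X,Y,JZ,JW) = R(X,Y,Z,W) *)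
Definition kaehler_identity (J : 'M[R]_N) (Rm : curv) : Prop :=
  forall a b c d, \sum_k \sum_l J k c * J l d * Rm a b k l = Rm a b c d.

Definition is_kaehler_curvature (J : 'M[R]_N) (Rm : curv) : Prop :=
  [/\ is_curvature_tensor Rm, is_hermitian_cs J & kaehler_identity J Rm].

Definition asymp_harmonic2_at (Rm : curv) (L1 L2 : R) : Prop :=
  forall x : vec,
    \sum_a Raxxb Rm x a a = L1 * norm2 x /\
    \sum_a \sum_b Raxxb Rm x a b * Raxxb Rm x b a = L2 * norm2 x ^+ 2.

(* constant holomorphic sectional curvature c at the point:
   H(x) = R(x,Jx,Jx,x)/|x|^4 = c for all x <> 0 *)
Definition const_holsec_at (J : 'M[R]_N) (Rm : curv) (c : R) : Prop :=
  forall x : vec, (exists i, x i != 0) ->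
    curv4 Rm x (Japp J x) (Japp J x) x = c * norm2 x ^+ 2.

End Curv.

From HB Require Import structures.
From mathcomp Require Import all_boot all_order all_algebra.
From mathcomp Require Import ring lra.
From Stdlib Require Import FunctionalExtensionality.
Import Order.TTheory GRing.Theory Num.Theory.
Set Implicit Arguments. Unset Strict Implicit.
Local Open Scope ring_scope.

(* At a point, polarizing the first condition gives rho = L1 g, and polarizing the
   second and tracing it twice gives 3 |R|^2 = 2N(N + 2) L2 - 2N L1^2 with N = 2n.
   Let R0 be the curvature tensor of constant holomorphic sectional curvature 4 and
   B = R - tau / (4n(n + 1)) R0.  As <R, R0> = 8 tau for every Kaehler curvature
   tensor R, expanding |B|^2 gives
     3 (n + 1) |B|^2 = 4n (2 (n + 1)^2 L2 - (n + 7) L1^2),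
   hence the inequality, with equality iff B = 0.  Finally B = 0 iff R has constant
   holomorphic sectional curvature tau / (n(n + 1)), because a Kaehler curvature
   tensor with vanishing holomorphic sectional curvature is zero. *)

Section Tensors.
Variables (R : realFieldType) (N : nat).
Implicit Types (T : curv R N) (x y z w : vec R N) (F G : 'I_N -> 'I_N -> 'I_N -> 'I_N -> R).

Definition sum4 F : R := \sum_a \sum_b \sum_c \sum_d F a b c d.

Lemma eq_sum4 F G : (forall a b c d, F a b c d = G a b c d) -> sum4 F = sum4 G.
Proof. by move=> FG; do 4!(apply: eq_bigr => ? _); apply: FG. Qed.

Lemma sum4_eq0 F : (forall a b c d, F a b c d = 0) -> sum4 F = 0.
Proof. by move=> F0; do 4!(apply: big1 => ? _); apply: F0. Qed.

Lemma sum4D F G : sum4 (fun a b c d => F a b c d + G a b c d) = sum4 F + sum4 G.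
Proof. by rewrite /sum4 -big_split; do 3!(apply: eq_bigr => ? _; rewrite -big_split). Qed.

Lemma sum4B F G : sum4 (fun a b c d => F a b c d - G a b c d) = sum4 F - sum4 G.
Proof. by rewrite /sum4 -sumrB; do 3!(apply: eq_bigr => ? _; rewrite -sumrB). Qed.

Lemma sum4N F : sum4 (fun a b c d => - F a b c d) = - sum4 F.
Proof. by rewrite /sum4 -sumrN; do 3!(apply: eq_bigr => ? _; rewrite -sumrN). Qed.

Lemma sum4Z k F : sum4 (fun a b c d => k * F a b c d) = k * sum4 F.
Proof. by rewrite /sum4 mulr_sumr; do 3!(apply: eq_bigr => ? _; rewrite mulr_sumr). Qed.

Lemma sum4_swap12 F : sum4 F = sum4 (fun a b c d => F b a c d).
Proof. exact: exchange_big. Qed.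

Lemma sum4_swap23 F : sum4 F = sum4 (fun a b c d => F a c b d).
Proof. by apply: eq_bigr => a _; rewrite exchange_big. Qed.

Lemma sum4_swap34 F : sum4 F = sum4 (fun a b c d => F a b d c).
Proof. by do 2!(apply: eq_bigr => ? _); rewrite exchange_big. Qed.

Lemma sum4_sum (G : 'I_N -> 'I_N -> 'I_N -> 'I_N -> 'I_N -> R) :
  sum4 (fun a b c d => \sum_e G e a b c d) = \sum_e sum4 (G e).
Proof.
rewrite /sum4.
under eq_bigr do under eq_bigr do under eq_bigr do rewrite exchange_big /=.
under eq_bigr do under eq_bigr do rewrite exchange_big /=.
by under eq_bigr do rewrite exchange_big /=; rewrite exchange_big.
Qed.

Lemma curv4E T x y z w :
  curv4 T x y z w = sum4 (fun a b c d => T a b c d * x a * y b * z c * w d).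
Proof. by []. Qed.

Definition kron (a b : 'I_N) : R := (a == b)%:R.

Lemma kronC a b : kron a b = kron b a.
Proof. by rewrite /kron eq_sym. Qed.

Lemma kronxx a : kron a a = 1.
Proof. by rewrite /kron eqxx. Qed.

Lemma kron_sqr a b : kron a b * kron a b = kron a b.
Proof. by rewrite /kron; case: (a == b); rewrite ?mulr1 ?mulr0. Qed.

Lemma sum_kron (f : 'I_N -> R) a : \sum_i kron a i * f i = f a.
Proof.
rewrite (bigD1 a) //= /kron eqxx mul1r big1 ?addr0 // => i.
by rewrite eq_sym => /negbTE ->; rewrite mul0r.
Qed.

Lemma sum_kron1 a : \sum_i kron a i = 1.
Proof. by rewrite -[RHS](sum_kron (fun=> 1) a); apply: eq_bigr => i _; rewrite mulr1. Qed.

Lemma sum_kron2 (f : 'I_N -> 'I_N -> R) p q :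
  \sum_c \sum_d f c d * (kron p c * kron q d) = f p q.
Proof.
transitivity (\sum_c kron p c * \sum_d kron q d * f c d).
  by apply: eq_bigr => c _; rewrite mulr_sumr; apply: eq_bigr => d _; ring.
by under eq_bigr do rewrite sum_kron; rewrite sum_kron.
Qed.

Definition evec (a : 'I_N) : vec R N := kron a.
Definition vadd x y : vec R N := fun i => x i + y i.
Definition vscale (t : R) x : vec R N := fun i => t * x i.

Lemma sum_evec (f : 'I_N -> R) a : \sum_i f i * evec a i = f a.
Proof. by under eq_bigr do rewrite mulrC; apply: sum_kron. Qed.

Lemma curv4_evec T a b c d : curv4 T (evec a) (evec b) (evec c) (evec d) = T a b c d.
Proof.
rewrite /curv4.
under eq_bigr do under eq_bigr do under eq_bigr do rewrite sum_evec.
under eq_bigr do under eq_bigr do rewrite sum_evec.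
by under eq_bigr do rewrite sum_evec; rewrite sum_evec.
Qed.

Lemma curv4D1 T x x' y z w : curv4 T (vadd x x') y z w = curv4 T x y z w + curv4 T x' y z w.
Proof. by rewrite !curv4E -sum4D; apply: eq_sum4 => *; rewrite /vadd; ring. Qed.
Lemma curv4D2 T x y y' z w : curv4 T x (vadd y y') z w = curv4 T x y z w + curv4 T x y' z w.
Proof. by rewrite !curv4E -sum4D; apply: eq_sum4 => *; rewrite /vadd; ring. Qed.
Lemma curv4D3 T x y z z' w : curv4 T x y (vadd z z') w = curv4 T x y z w + curv4 T x y z' w.
Proof. by rewrite !curv4E -sum4D; apply: eq_sum4 => *; rewrite /vadd; ring. Qed.
Lemma curv4D4 T x y z w w' : curv4 T x y z (vadd w w') = curv4 T x y z w + curv4 T x y z w'.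
Proof. by rewrite !curv4E -sum4D; apply: eq_sum4 => *; rewrite /vadd; ring. Qed.
Lemma curv4Z1 T t x y z w : curv4 T (vscale t x) y z w = t * curv4 T x y z w.
Proof. by rewrite !curv4E -sum4Z; apply: eq_sum4 => *; rewrite /vscale; ring. Qed.
Lemma curv4Z2 T t x y z w : curv4 T x (vscale t y) z w = t * curv4 T x y z w.
Proof. by rewrite !curv4E -sum4Z; apply: eq_sum4 => *; rewrite /vscale; ring. Qed.
Lemma curv4Z3 T t x y z w : curv4 T x y (vscale t z) w = t * curv4 T x y z w.
Proof. by rewrite !curv4E -sum4Z; apply: eq_sum4 => *; rewrite /vscale; ring. Qed.
Lemma curv4Z4 T t x y z w : curv4 T x y z (vscale t w) = t * curv4 T x y z w.
Proof. by rewrite !curv4E -sum4Z; apply: eq_sum4 => *; rewrite /vscale; ring. Qed.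

Section CurvatureTensor.
Variable T : curv R N.
Hypothesis HT : is_curvature_tensor T.

Lemma curv4_antisym12 x y z w : curv4 T y x z w = - curv4 T x y z w.
Proof.
case: HT => asym12 _ _ _; rewrite !curv4E sum4_swap12 -mulN1r -sum4Z.
by apply: eq_sum4 => a b c d; rewrite asym12; ring.
Qed.

Lemma curv4_antisym34 x y z w : curv4 T x y w z = - curv4 T x y z w.
Proof.
case: HT => _ asym34 _ _; rewrite !curv4E sum4_swap34 -mulN1r -sum4Z.
by apply: eq_sum4 => a b c d; rewrite asym34; ring.
Qed.

Lemma curv4_pair_sym x y z w : curv4 T z w x y = curv4 T x y z w.
Proof.
case: HT => _ _ pair _; rewrite !curv4E sum4_swap23 sum4_swap12 sum4_swap34 sum4_swap23.
by apply: eq_sum4 => a b c d; rewrite pair; ring.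
Qed.

Lemma curv4_bianchi x y z w : curv4 T x y z w + curv4 T y z x w + curv4 T z x y w = 0.
Proof.
case: HT => _ _ _ bianchi; rewrite !curv4E [in X in _ + X + _]sum4_swap23 [in X in _ + X + _]sum4_swap12.
rewrite [in X in _ + X]sum4_swap12 [in X in _ + X]sum4_swap23 -!sum4D.
apply: sum4_eq0 => a b c d /=.
by rewrite -[RHS](mul0r (x a * y b * z c * w d)) -(bianchi a b c d); ring.
Qed.

End CurvatureTensor.
End Tensors.
Arguments kron {R N}.
Arguments kronC {R N}.
Arguments kronxx {R N}.
Arguments kron_sqr {R N}.
Arguments evec {R N}.

Section Forms.
Variables (R : realFieldType) (N : nat).
Implicit Types (T : curv R N) (x y z w u v : vec R N) (P Q : 'I_N -> 'I_N -> R) (J : 'M[R]_N).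

Definition bform P x y : R := \sum_i \sum_j P i j * x i * y j.
Definition dotv x y : R := \sum_i x i * y i.

Lemma eq_bform P Q x y : (forall i j, P i j = Q i j) -> bform P x y = bform Q x y.
Proof. by move=> PQ; do 2!(apply: eq_bigr => ? _); rewrite PQ. Qed.

Lemma bform_mul P Q x y z w :
  bform P x y * bform Q z w = sum4 (fun a b c d => P a b * Q c d * x a * y b * z c * w d).
Proof.
rewrite /bform big_distrl; apply: eq_bigr => a _; rewrite big_distrl; apply: eq_bigr => b _.
rewrite big_distrr; apply: eq_bigr => c _; rewrite big_distrr; apply: eq_bigr => d _ /=.
ring.
Qed.

Lemma sum4_bc_ad P Q x y z w :
  sum4 (fun a b c d => P b c * Q a d * x a * y b * z c * w d) = bform P y z * bform Q x w.
Proof.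
rewrite bform_mul sum4_swap12 sum4_swap23.
by apply: eq_sum4 => a b c d; ring.
Qed.

Lemma sum4_ac_bd P Q x y z w :
  sum4 (fun a b c d => P a c * Q b d * x a * y b * z c * w d) = bform P x z * bform Q y w.
Proof. by rewrite bform_mul sum4_swap23; apply: eq_sum4 => a b c d; ring. Qed.

Lemma curv4_bform T x y z w : curv4 T x y z w = \sum_a \sum_b x a * y b * bform (T a b) z w.
Proof.
apply: eq_bigr => a _; apply: eq_bigr => b _; rewrite /bform mulr_sumr.
by apply: eq_bigr => c _; rewrite mulr_sumr; apply: eq_bigr => d _; ring.
Qed.

Lemma bform_Japp J P z w :
  bform P (Japp J z) (Japp J w) = bform (fun c d => \sum_k \sum_l J k c * J l d * P k l) z w.
Proof.
transitivity (sum4 (fun k l c d => P k l * (J k c * z c) * (J l d * w d))).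
  rewrite /bform /Japp; apply: eq_bigr => k _; apply: eq_bigr => l _.
  by rewrite [P k l * _]mulr_sumr mulr_suml; apply: eq_bigr => c _; rewrite mulr_sumr.
rewrite sum4_swap23 sum4_swap12 sum4_swap34 sum4_swap23.
apply: eq_bigr => c _; apply: eq_bigr => d _; rewrite !mulr_suml.
by apply: eq_bigr => k _; rewrite !mulr_suml; apply: eq_bigr => l _; ring.
Qed.

Lemma bform_kron x y : bform kron x y = dotv x y.
Proof. by apply: eq_bigr => i _; under eq_bigr do rewrite -mulrA; rewrite sum_kron. Qed.

Lemma bform_Japp_r J x y : bform J x y = dotv x (Japp J y).
Proof.
by apply: eq_bigr => i _; rewrite /Japp mulr_sumr; apply: eq_bigr => j _; ring.
Qed.

Lemma bform_Japp_l J x y : bform J^T x y = dotv (Japp J x) y.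
Proof.
rewrite /bform exchange_big; apply: eq_bigr => j _; rewrite /Japp mulr_suml.
by apply: eq_bigr => i _; rewrite mxE; ring.
Qed.

Lemma curv4_Japp34 J T x y z w :
  curv4 T x y (Japp J z) (Japp J w) =
  curv4 (fun a b c d => \sum_k \sum_l J k c * J l d * T a b k l) x y z w.
Proof.
by rewrite !curv4_bform; apply: eq_bigr => a _; apply: eq_bigr => b _; rewrite bform_Japp.
Qed.

Lemma curv4_kaehler J T x y z w : kaehler_identity J T ->
  curv4 T x y (Japp J z) (Japp J w) = curv4 T x y z w.
Proof. by move=> HK; rewrite curv4_Japp34 !curv4E; apply: eq_sum4 => a b c d; rewrite HK. Qed.

End Forms.
Arguments dotv {R N}.

Section Vectors.
Variables (R : realFieldType) (N : nat).
Implicit Types (x y u v : vec R N) (J : 'M[R]_N).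

Lemma dotvC u v : dotv u v = dotv v u.
Proof. by apply: eq_bigr => i _; rewrite mulrC. Qed.

Lemma dotvZl t u v : dotv (vscale t u) v = t * dotv u v.
Proof. by rewrite /dotv mulr_sumr; apply: eq_bigr => i _; rewrite mulrA. Qed.

Lemma dotvZr t u v : dotv u (vscale t v) = t * dotv u v.
Proof. by rewrite /dotv mulr_sumr; apply: eq_bigr => i _; rewrite /vscale; ring. Qed.

Lemma norm2_dotv x : norm2 x = dotv x x.
Proof. by apply: eq_bigr => i _; rewrite expr2. Qed.

Lemma JappD J x y : Japp J (vadd x y) = vadd (Japp J x) (Japp J y).
Proof.
apply: functional_extensionality => k; rewrite /Japp /vadd -big_split.
by apply: eq_bigr => l _; rewrite mulrDr.
Qed.

Lemma JappZ J t x : Japp J (vscale t x) = vscale t (Japp J x).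
Proof.
apply: functional_extensionality => k; rewrite /Japp /vscale mulr_sumr.
by apply: eq_bigr => l _; ring.
Qed.

End Vectors.

Section Hermitian.
Variables (R : realFieldType) (N : nat) (J : 'M[R]_N).
Hypothesis HJ : is_hermitian_cs J.
Implicit Types (x y u v : vec R N).

Lemma hermitian_skew a b : J a b = - J b a.
Proof.
case: HJ => JJ JtJ; have trJ : J^T = - J.
  by rewrite -[J^T]mulmx1 -[1%:M]opprK -JJ mulmxN mulmxA JtJ mul1mx.
by have := congr1 (fun M : 'M[R]_N => M b a) trJ; rewrite !mxE.
Qed.

Lemma hermitian_diag a : J a a = 0.
Proof. have := hermitian_skew a a; lra. Qed.

Lemma hermitian_sqr a b : \sum_k J a k * J k b = - kron a b.
Proof.
case: HJ => JJ _; have := congr1 (fun M : 'M[R]_N => M a b) JJ.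
by rewrite !mxE /kron => ->.
Qed.

Lemma hermitian_orth a b : \sum_k J k a * J k b = kron a b.
Proof.
case: HJ => _ JtJ; have := congr1 (fun M : 'M[R]_N => M a b) JtJ.
by rewrite !mxE /kron => <-; apply: eq_bigr => k _; rewrite ?mxE.
Qed.

Lemma hermitian_orth_tr a b : \sum_k J a k * J b k = kron a b.
Proof.
rewrite -[RHS]opprK -hermitian_sqr -sumrN.
by apply: eq_bigr => k _; rewrite (hermitian_skew b k) mulrN.
Qed.

Lemma Japp_invol x : Japp J (Japp J x) = vscale (-1) x.
Proof.
apply: functional_extensionality => k; rewrite /Japp /vscale.
under eq_bigr do rewrite mulr_sumr.
rewrite exchange_big /=.
under eq_bigr do under eq_bigr do rewrite mulrA.
under eq_bigr do rewrite -mulr_suml hermitian_sqr mulNr.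
by rewrite sumrN sum_kron mulN1r.
Qed.

Lemma dotv_Japp u v : dotv (Japp J u) (Japp J v) = dotv u v.
Proof.
rewrite -!bform_kron bform_Japp; apply: eq_bform => c d.
under eq_bigr do under eq_bigr do rewrite mulrC.
by under eq_bigr do rewrite sum_kron; apply: hermitian_orth.
Qed.

Lemma dotv_Japp_skew u v : dotv u (Japp J v) = - dotv (Japp J u) v.
Proof.
rewrite -bform_Japp_r -bform_Japp_l /bform -sumrN; apply: eq_bigr => i _.
by rewrite -sumrN; apply: eq_bigr => j _; rewrite mxE (hermitian_skew j i); ring.
Qed.

Lemma dotv_Japp_self u : dotv u (Japp J u) = 0.
Proof. by have := dotv_Japp_skew u u; rewrite [dotv (Japp J u) u]dotvC; lra. Qed.

End Hermitian.

Section Vanishing.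
Variables (R : realFieldType) (N : nat).
Implicit Types (x y : vec R N).

Lemma curv_eq0_of_sectional0 (T : curv R N) : is_curvature_tensor T ->
  (forall x y, curv4 T x y y x = 0) -> forall a b c d, T a b c d = 0.
Proof.
move=> HT K0.
have Kpol a d y : curv4 T (evec a) y y (evec d) = 0.
  have := K0 (vadd (evec a) (evec d)) y.
  rewrite curv4D1 !curv4D4 !K0 -(curv4_pair_sym HT) curv4_antisym12 // curv4_antisym34 //.
  lra.
have sym23 a b c d : T a b c d + T a c b d = 0.
  have := Kpol a d (vadd (evec b) (evec c)).
  by rewrite curv4D2 !curv4D3 !Kpol !curv4_evec add0r addr0.
case: HT => asym12 _ _ bianchi a b c d.
have := bianchi a b c d; have := sym23 c a b d; have := sym23 c b a d.
rewrite (asym12 c a) (asym12 b c) (asym12 c b); have := sym23 a b c d; lra.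
Qed.

Section Kaehler.
Variables (B : curv R N) (J : 'M[R]_N).
Hypotheses (HB : is_curvature_tensor B) (HJ : is_hermitian_cs J) (HK : kaehler_identity J B).
Hypothesis holsec0 : forall x, curv4 B x (Japp J x) (Japp J x) x = 0.

Let G x1 x2 x3 x4 := curv4 B x1 (Japp J x2) (Japp J x3) x4.

Lemma holsec_polar_eq0 x y :
  G x x y y + G x y x y + G x y y x + G y x x y + G y x y x + G y y x x = 0.
Proof.
have := holsec0 (vadd x y); have := holsec0 (vadd x (vscale (-1) y)).
have := holsec0 x; have := holsec0 y.
rewrite /G !JappD !JappZ !(curv4D1, curv4D2, curv4D3, curv4D4) !(curv4Z1, curv4Z2, curv4Z3, curv4Z4).
lra.
Qed.

Lemma holsec_polar_sectional x y :
  G x x y y + G x y x y + G x y y x + G y x x y + G y x y x + G y y x x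
  = 2 * curv4 B x y y x + 6 * curv4 B x (Japp J y) (Japp J y) x.
Proof.
rewrite /G; set Jx := Japp J x; set Jy := Japp J y.
have := curv4_pair_sym HB Jx x y Jy; have := curv4_antisym12 HB x Jx y Jy.
have := curv4_antisym34 HB x Jx Jy y; have := curv4_antisym34 HB x Jy x Jy.
have := curv4_pair_sym HB Jy x y Jx; have := curv4_antisym12 HB x Jy y Jx.
have := curv4_antisym34 HB x Jy Jx y; have := curv4_antisym12 HB Jx y x Jy.
have := curv4_pair_sym HB x Jy Jx y; have := curv4_bianchi HB x Jx Jy y.
have := curv4_pair_sym HB x y Jx Jy; have := curv4_antisym34 HB x y y x.
have := curv4_antisym12 HB x Jy Jx y.
have := curv4_kaehler x y x y HK; have := curv4_kaehler x Jy Jx y HK.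
have := curv4_kaehler y Jx Jx y HK.
rewrite /Jx /Jy !(Japp_invol HJ) !curv4Z3 -/Jx -/Jy.
lra.
Qed.

Lemma sectional0_of_holsec0 x y : curv4 B x y y x = 0.
Proof.
have := holsec_polar_sectional x y; have := holsec_polar_sectional x (Japp J y).
rewrite !holsec_polar_eq0 (Japp_invol HJ) curv4Z2 curv4Z3.
lra.
Qed.

End Kaehler.

Lemma kaehler_curv_eq0_of_holsec0 (B : curv R N) (J : 'M[R]_N) :
  is_kaehler_curvature J B -> (forall x, curv4 B x (Japp J x) (Japp J x) x = 0) ->
  forall a b c d, B a b c d = 0.
Proof.
case=> HB HJ HK holsec0; apply: curv_eq0_of_sectional0 => // x y.
exact: (sectional0_of_holsec0 HB HJ HK holsec0).
Qed.

End Vanishing.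

Section Model.
Variables (R : realFieldType) (N : nat).
Implicit Types (x y z w : vec R N).

Variable J : 'M[R]_N.

(* Curvature tensor of constant holomorphic sectional curvature 4 (complex
   projective space); [curv4_Rmodel] gives it in invariant form. *)
Definition Rmodel : curv R N := fun a b c d =>
  kron b c * kron a d - kron a c * kron b d + J c b * J d a - J c a * J d b
  + 2 * (J a b * J d c).

Lemma curv4_Rmodel x y z w : curv4 Rmodel x y z w =
  dotv y z * dotv x w - dotv x z * dotv y w + dotv (Japp J y) z * dotv (Japp J x) w
  - dotv (Japp J x) z * dotv (Japp J y) w + 2 * (dotv x (Japp J y) * dotv (Japp J z) w).
Proof.
transitivity (sum4 (fun a b c d => kron b c * kron a d * x a * y b * z c * w d)
  - sum4 (fun a b c d => kron a c * kron b d * x a * y b * z c * w d)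
  + sum4 (fun a b c d => J^T b c * J^T a d * x a * y b * z c * w d)
  - sum4 (fun a b c d => J^T a c * J^T b d * x a * y b * z c * w d)
  + 2 * sum4 (fun a b c d => J a b * J^T c d * x a * y b * z c * w d)).
  rewrite curv4E -sum4Z -sum4B -sum4D -sum4B -sum4D.
  by apply: eq_sum4 => a b c d; rewrite /Rmodel !mxE; ring.
rewrite !sum4_bc_ad !sum4_ac_bd -bform_mul !bform_kron !bform_Japp_l !bform_Japp_r.
ring.
Qed.

Hypothesis HJ : is_hermitian_cs J.

Lemma Rmodel_curvature : is_curvature_tensor Rmodel.
Proof.
have JS := hermitian_skew HJ.
split=> a b c d; rewrite /Rmodel.
- by rewrite (JS b a); ring.
- by rewrite (JS c d) (kronC b d) (kronC a d); ring.
- rewrite (kronC d a) (kronC c b) (kronC c a) (kronC d b).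
  by rewrite (JS a d) (JS b c) (JS a c) (JS b d) (JS c d) (JS b a); ring.
- rewrite (kronC c a) (kronC b a) (kronC c b).
  by rewrite (JS c b) (JS d a) (JS c a) (JS d b) (JS d c) (JS b a); ring.
Qed.

Lemma Rmodel_kaehler : kaehler_identity J Rmodel.
Proof.
move=> a b c d.
have := curv4_Japp34 J Rmodel (evec a) (evec b) (evec c) (evec d).
rewrite curv4_evec => <-; rewrite -[Rmodel a b c d]curv4_evec !curv4_Rmodel.
by rewrite !(dotv_Japp HJ) !(dotv_Japp_skew HJ); ring.
Qed.

Lemma Rmodel_holsec x : curv4 Rmodel x (Japp J x) (Japp J x) x = 4 * norm2 x ^+ 2.
Proof.
rewrite curv4_Rmodel norm2_dotv !(Japp_invol HJ) !(dotv_Japp HJ) !dotvZl ?dotvZr.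
by rewrite (dotvC (Japp J x) x) !(dotv_Japp_self HJ); ring.
Qed.

Lemma scal_Rmodel : scal Rmodel = N%:R ^+ 2 + 2 * N%:R.
Proof.
transitivity (\sum_(a < N) (N%:R + 2 : R)); last by rewrite sumr_const card_ord -mulr_natr; ring.
apply: eq_bigr => a _; rewrite /Rmodel.
transitivity (\sum_(i < N) (1 - kron a i + 3 * (J a i * J a i))).
  apply: eq_bigr => i _; rewrite !kronxx (kronC i a) kron_sqr (hermitian_diag HJ i).
  by rewrite (hermitian_skew HJ i a); ring.
rewrite big_split sumrB /= -mulr_sumr (hermitian_orth_tr HJ) kronxx sum_kron1.
by rewrite sumr_const card_ord -mulr_natr; ring.
Qed.

End Model.

Section Norm.
Variables (R : realFieldType) (N : nat).
Implicit Types (T : curv R N).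

Definition tinner T T' : R := sum4 (fun a b c d => T a b c d * T' a b c d).

Lemma tinner_ge0 T : 0 <= tinner T T.
Proof. by do 4!(apply: sumr_ge0 => ? _); rewrite -expr2 sqr_ge0. Qed.

Lemma tinner_eq0 T : tinner T T = 0 -> forall a b c d, T a b c d = 0.
Proof.
have sq_ge0 (s : R) : 0 <= s * s by rewrite -expr2 sqr_ge0.
have ge0_3 a b c : 0 <= \sum_d T a b c d * T a b c d by apply: sumr_ge0.
have ge0_2 a b : 0 <= \sum_c \sum_d T a b c d * T a b c d.
  by apply: sumr_ge0 => c _; apply: ge0_3.
have ge0_1 a : 0 <= \sum_b \sum_c \sum_d T a b c d * T a b c d.
  by apply: sumr_ge0 => b _; apply: ge0_2.
move=> T0 a b c d.
have := psumr_eq0P (fun a _ => ge0_1 a) T0 (i:=a) isT.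
move/(psumr_eq0P (fun b _ => ge0_2 a b)) => /(_ b isT).
move/(psumr_eq0P (fun c _ => ge0_3 a b c)) => /(_ c isT).
move/(psumr_eq0P (fun d _ => sq_ge0 (T a b c d))) => /(_ d isT) /eqP.
by rewrite mulf_eq0 orbb => /eqP.
Qed.

Lemma tinner_swap23 T : is_curvature_tensor T ->
  2 * tinner T (fun a b c d => T a c b d) = tinner T T.
Proof.
case=> asym12 asym34 pair bianchi.
have hX : tinner T (fun a b c d => T a c b d)
    = tinner T (fun a b c d => T a d b c) + tinner T T.
  rewrite /tinner -sum4D; apply: eq_sum4 => a b c d.
  have -> : T a c b d = T a d b c + T a b c d.
    by move: (bianchi a c b d); rewrite (asym12 c b) (pair b c a d) (asym12 b a); lra.
  by rewrite mulrDr.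
have hY : tinner T (fun a b c d => T a d b c) = - tinner T (fun a b c d => T a c b d).
  by rewrite /tinner sum4_swap34 -mulN1r -sum4Z; apply: eq_sum4 => a b c d; rewrite asym34; ring.
lra.
Qed.

Section Kaehler.
Variables (T : curv R N) (J : 'M[R]_N).
Hypotheses (HT : is_curvature_tensor T) (HJ : is_hermitian_cs J) (HK : kaehler_identity J T).

Lemma kaehler_contract p q u v : \sum_c \sum_d T p q c d * (J c u * J d v) = T p q u v.
Proof. by rewrite -HK; do 2!(apply: eq_bigr => ? _); ring. Qed.

Lemma tinner_Rmodel : tinner T (Rmodel J) = 8 * scal T.
Proof.
case: HT => _ asym34 _ bianchi.
have scal_abab : \sum_a \sum_b T a b a b = - scal T.
  by rewrite -sumrN; apply: eq_bigr => a _; rewrite -sumrN; apply: eq_bigr => b _; rewrite asym34.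
have s1 : sum4 (fun a b c d => T a b c d * (kron b c * kron a d)) = scal T.
  by apply: eq_bigr => a _; apply: eq_bigr => b _; rewrite sum_kron2.
have s2 : sum4 (fun a b c d => T a b c d * (kron a c * kron b d)) = - scal T.
  by rewrite -scal_abab; apply: eq_bigr => a _; apply: eq_bigr => b _; rewrite sum_kron2.
have s3 : sum4 (fun a b c d => T a b c d * (J c b * J d a)) = scal T.
  by apply: eq_bigr => a _; apply: eq_bigr => b _; rewrite kaehler_contract.
have s4 : sum4 (fun a b c d => T a b c d * (J c a * J d b)) = - scal T.
  by rewrite -scal_abab; apply: eq_bigr => a _; apply: eq_bigr => b _; rewrite kaehler_contract.
have s5 : sum4 (fun a b c d => T a b c d * (J a b * J d c)) = 2 * scal T.
  transitivity (- sum4 (fun a b c d => T a b c d * (J c a * J d b))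
                + sum4 (fun a b c d => T a b c d * (J c b * J d a))).
    rewrite [X in - X + _]sum4_swap23 [X in - X + _]sum4_swap12.
    rewrite [X in _ + X]sum4_swap12 [X in _ + X]sum4_swap23 -mulN1r -sum4Z -sum4D.
    apply: eq_sum4 => a b c d; rewrite (hermitian_skew HJ b a).
    have -> : T a b c d = - T b c a d - T c a b d by move: (bianchi a b c d); lra.
    by ring.
  by rewrite s3 s4; ring.
rewrite /tinner /Rmodel.
under eq_sum4 => a b c d do rewrite !mulrDr !mulrN [_ * (2 * _)]mulrCA.
by rewrite !sum4D !sum4N sum4Z s1 s2 s3 s4 s5; ring.
Qed.

End Kaehler.
End Norm.

Section Asymptotic.
Variables (R : realFieldType) (N : nat).
Implicit Types (T : curv R N) (x y : vec R N) (P : 'I_N -> 'I_N -> R).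

Lemma bformD1 P x x' y : bform P (vadd x x') y = bform P x y + bform P x' y.
Proof.
rewrite /bform -big_split; apply: eq_bigr => i _; rewrite -big_split.
by apply: eq_bigr => j _; rewrite /vadd /=; ring.
Qed.

Lemma bformD2 P x y y' : bform P x (vadd y y') = bform P x y + bform P x y'.
Proof.
rewrite /bform -big_split; apply: eq_bigr => i _; rewrite -big_split.
by apply: eq_bigr => j _; rewrite /vadd /=; ring.
Qed.

Lemma bform_evec P i j : bform P (evec i) (evec j) = P i j.
Proof. by rewrite /bform; under eq_bigr do rewrite sum_evec; rewrite sum_evec. Qed.

Definition ricci T i j : R := \sum_a T a i j a.

Lemma Raxxb_trace T x : \sum_a Raxxb T x a a = bform (ricci T) x x.
Proof.
rewrite /Raxxb /bform /ricci exchange_big; apply: eq_bigr => i _.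
by rewrite exchange_big; apply: eq_bigr => j _; rewrite !mulr_suml.
Qed.

Lemma einstein_of_asymp1 T L1 : is_curvature_tensor T ->
  (forall x, \sum_a Raxxb T x a a = L1 * norm2 x) -> forall i j, ricci T i j = L1 * kron i j.
Proof.
case=> asym12 asym34 pair _ asymp1 i j.
have ricciC : ricci T j i = ricci T i j.
  by apply: eq_bigr => a _; rewrite pair asym12 asym34 opprK.
have quad x : bform (ricci T) x x = L1 * bform kron x x.
  by rewrite -Raxxb_trace asymp1 norm2_dotv bform_kron.
have := quad (vadd (evec i) (evec j)); have := quad (evec i); have := quad (evec j).
rewrite !(bformD1, bformD2) !bform_evec !kronxx (kronC j i) ricciC.
lra.
Qed.

Lemma scal_einstein T L1 : (forall i j, ricci T i j = L1 * kron i j) -> scal T = N%:R * L1.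
Proof.
move=> ricciE; rewrite /scal exchange_big /=.
transitivity (\sum_(i < N) L1); last by rewrite sumr_const card_ord mulr_natl.
by apply: eq_bigr => i _; have := ricciE i i; rewrite kronxx mulr1.
Qed.

(* Components of the quartic form x |-> tr (R_x ^ 2), where R_x = R(., x) x is the
   Jacobi operator. *)
Definition jacobi_sq T : curv R N := fun i j k l => \sum_a \sum_b T a i j b * T b k l a.

Lemma Raxxb_sqr_trace T x :
  \sum_a \sum_b Raxxb T x a b * Raxxb T x b a = curv4 (jacobi_sq T) x x x x.
Proof.
rewrite /curv4 /jacobi_sq.
transitivity (\sum_a \sum_b sum4 (fun i j k l => T a i j b * T b k l a * x i * x j * x k * x l)).
  apply: eq_bigr => a _; apply: eq_bigr => b _; rewrite /Raxxb big_distrl.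
  apply: eq_bigr => i _; rewrite big_distrl; apply: eq_bigr => j _.
  rewrite big_distrr; apply: eq_bigr => k _; rewrite big_distrr; apply: eq_bigr => l _ /=.
  ring.
under eq_bigr do rewrite -sum4_sum.
rewrite -sum4_sum; apply: eq_sum4 => i j k l.
rewrite -!mulrA mulr_suml; apply: eq_bigr => a _; rewrite mulr_suml.
by apply: eq_bigr => b _; ring.
Qed.

(* Six times the symmetrization of [T] at (i, i, k, k); it only depends on the
   quartic form x |-> T(x, x, x, x). *)
Definition sym6 T i k : R :=
  T i i k k + T i k i k + T i k k i + T k i i k + T k i k i + T k k i i.

Lemma eq_sym6 T T' : (forall x, curv4 T x x x x = curv4 T' x x x x) ->
  forall i k, sym6 T i k = sym6 T' i k.
Proof.
move=> quartic i k.
have polar S : curv4 S (vadd (evec i) (evec k)) (vadd (evec i) (evec k))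
                       (vadd (evec i) (evec k)) (vadd (evec i) (evec k))
  + curv4 S (vadd (evec i) (vscale (-1) (evec k))) (vadd (evec i) (vscale (-1) (evec k)))
            (vadd (evec i) (vscale (-1) (evec k))) (vadd (evec i) (vscale (-1) (evec k)))
  = 2 * (S i i i i + S k k k k + sym6 S i k).
  by rewrite !(curv4D1, curv4D2, curv4D3, curv4D4) !(curv4Z1, curv4Z2, curv4Z3, curv4Z4)
     !curv4_evec /sym6; ring.
have := polar T; have := polar T'; rewrite !quartic -!curv4_evec !quartic !curv4_evec.
lra.
Qed.

Lemma sum_sym6 T : \sum_i \sum_k sym6 T i k = 2 * \sum_i \sum_k (T i i k k + T i k i k + T i k k i).
Proof.
pose F i k := T i i k k + T i k i k + T i k k i.
transitivity (\sum_i \sum_k (F i k + F k i)).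
  by do 2!(apply: eq_bigr => ? _); rewrite /sym6 /F; ring.
under eq_bigr do rewrite big_split /=.
by rewrite big_split /= [X in _ + X]exchange_big -mulr2n mulr_natl.
Qed.

Definition metric_sq (L : R) : curv R N := fun a b c d => L * (kron a b * kron c d).

Lemma curv4_metric_sq L x : curv4 (metric_sq L) x x x x = L * norm2 x ^+ 2.
Proof.
rewrite curv4E norm2_dotv -bform_kron expr2 bform_mul -sum4Z.
by apply: eq_sum4 => a b c d; rewrite /metric_sq; ring.
Qed.

Lemma sum_sym6_metric_sq L : \sum_i \sum_k sym6 (metric_sq L) i k = L * (2 * N%:R ^+ 2 + 4 * N%:R).
Proof.
rewrite sum_sym6 /metric_sq.
transitivity (2 * \sum_(i < N) \sum_(k < N) (L + 2 * L * kron i k)).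
  by congr (_ * _); apply: eq_bigr => i _; apply: eq_bigr => k _; rewrite !kronxx (kronC k i) kron_sqr; ring.
under eq_bigr do rewrite big_split /= -mulr_sumr sum_kron1 sumr_const card_ord.
by rewrite sumr_const card_ord -[(_ + _) *+ N]mulr_natl -[L *+ N]mulr_natl; ring.
Qed.

Section Einstein.
Variables (T : curv R N) (L1 : R).
Hypotheses (HT : is_curvature_tensor T) (ricciE : forall i j, ricci T i j = L1 * kron i j).

Lemma sum_jacobi_sq : \sum_i \sum_k (jacobi_sq T i i k k + jacobi_sq T i k i k + jacobi_sq T i k k i)
  = N%:R * L1 ^+ 2 + tinner T (fun a b c d => T a c b d) + tinner T T.
Proof.
case: HT => asym12 asym34 pair _.
have rev a b c d : T d c b a = T a b c d by rewrite pair asym12 asym34 opprK.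
have trace_term : \sum_i \sum_k jacobi_sq T i i k k = N%:R * L1 ^+ 2.
  transitivity (\sum_a \sum_b (\sum_i T a i i b) * (\sum_k T b k k a)).
    rewrite [LHS](_ : _ = sum4 (fun i k a b => T a i i b * T b k k a)) //.
    rewrite sum4_swap23 sum4_swap12 sum4_swap34 sum4_swap23.
    apply: eq_bigr => a _; apply: eq_bigr => b _.
    by rewrite big_distrl; apply: eq_bigr => i _; rewrite big_distrr.
  transitivity (\sum_(a < N) \sum_(b < N) L1 ^+ 2 * kron a b).
    apply: eq_bigr => a _; apply: eq_bigr => b _.
    have -> : \sum_i T a i i b = ricci T b a by apply: eq_bigr => i _; rewrite pair.
    have -> : \sum_k T b k k a = ricci T a b by apply: eq_bigr => i _; rewrite pair.
    by rewrite !ricciE (kronC b a) mulrACA kron_sqr expr2.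
  by under eq_bigr do rewrite -mulr_sumr sum_kron1 mulr1; rewrite sumr_const card_ord mulr_natl.
have cross_term : \sum_i \sum_k jacobi_sq T i k i k = tinner T (fun a b c d => T a c b d).
  rewrite [LHS](_ : _ = sum4 (fun i k a b => T a i k b * T b i k a)) //.
  by rewrite sum4_swap23 sum4_swap12; apply: eq_sum4 => a b c d; rewrite [T d b c a]rev.
have norm_term : \sum_i \sum_k jacobi_sq T i k k i = tinner T T.
  rewrite [LHS](_ : _ = sum4 (fun i k a b => T a i k b * T b k i a)) //.
  by rewrite sum4_swap23 sum4_swap12; apply: eq_sum4 => a b c d; rewrite rev.
rewrite -trace_term -cross_term -norm_term.
by rewrite -!big_split /=; apply: eq_bigr => i _; rewrite -!big_split.
Qed.

Lemma tinner_asymp2 L2 :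
  (forall x, \sum_a \sum_b Raxxb T x a b * Raxxb T x b a = L2 * norm2 x ^+ 2) ->
  3 * tinner T T + 2 * (N%:R * L1 ^+ 2) = L2 * (2 * N%:R ^+ 2 + 4 * N%:R).
Proof.
move=> asymp2.
have quarticE x : curv4 (jacobi_sq T) x x x x = curv4 (metric_sq L2) x x x x.
  by rewrite -Raxxb_sqr_trace asymp2 curv4_metric_sq.
have : \sum_i \sum_k sym6 (jacobi_sq T) i k = \sum_i \sum_k sym6 (metric_sq L2) i k.
  by do 2!(apply: eq_bigr => ? _); apply: eq_sym6.
rewrite sum_sym6_metric_sq sum_sym6 sum_jacobi_sq -(tinner_swap23 HT).
lra.
Qed.

End Einstein.
End Asymptotic.

Section Combination.
Variables (R : realFieldType) (N : nat).
Implicit Types (T : curv R N).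

Definition tcomb T k T' : curv R N := fun a b c d => T a b c d - k * T' a b c d.

Lemma tcomb_curvature T k T' : is_curvature_tensor T -> is_curvature_tensor T' ->
  is_curvature_tensor (tcomb T k T').
Proof.
case=> a1 a2 a3 a4 [b1 b2 b3 b4]; split=> a b c d; rewrite /tcomb.
- by rewrite a1 b1; ring.
- by rewrite a2 b2; ring.
- by rewrite a3 b3.
- transitivity ((T a b c d + T b c a d + T c a b d) - k * (T' a b c d + T' b c a d + T' c a b d)).
    by ring.
  by rewrite a4 b4 mulr0 subr0.
Qed.

Lemma tcomb_kaehler (J : 'M[R]_N) T k T' : kaehler_identity J T -> kaehler_identity J T' ->
  kaehler_identity J (tcomb T k T').
Proof.
move=> KT KT' a b c d; rewrite /tcomb -(KT a b c d) -(KT' a b c d) mulr_sumr -sumrB.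
by apply: eq_bigr => i _; rewrite mulr_sumr -sumrB; apply: eq_bigr => j _; ring.
Qed.

Lemma curv4_tcomb T k T' x y z w :
  curv4 (tcomb T k T') x y z w = curv4 T x y z w - k * curv4 T' x y z w.
Proof. by rewrite !curv4E -sum4Z -sum4B; apply: eq_sum4 => a b c d; rewrite /tcomb; ring. Qed.

Lemma tinner_tcomb T k T' :
  tinner (tcomb T k T') (tcomb T k T') = tinner T T - 2 * k * tinner T T' + k ^+ 2 * tinner T' T'.
Proof.
rewrite /tinner -!sum4Z -sum4B -sum4D.
by apply: eq_sum4 => a b c d; rewrite /tcomb; ring.
Qed.

End Combination.

Section Point.
Variables (R : realFieldType) (n : nat).
Local Notation N := n.*2.
Variables (T : curv R N) (J : 'M[R]_N) (L1 L2 : R).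
Hypotheses (n_gt0 : (0 < n)%N) (HTJ : is_kaehler_curvature J T) (HA : asymp_harmonic2_at T L1 L2).

(* [kappa] is the holomorphic sectional curvature forced by equality; [Rmodel J] has
   holomorphic sectional curvature 4, hence the factor 1/4. *)
Let kappa := scal T / (n * (n + 1))%:R.
Definition holsec_defect := tcomb T (kappa / 4) (Rmodel J).
Let B := holsec_defect.

Lemma asymp_gap_eq : L1 ^+ 2 - (2 * (n + 1) ^ 2)%:R / (n + 7)%:R * L2
  = - ((3 * (n + 1))%:R / (4 * n * (n + 7))%:R * tinner B B).
Proof.
case: HTJ => HT HJ HK.
have ricciE := einstein_of_asymp1 HT (fun x => (HA x).1).
have normT := tinner_asymp2 HT ricciE (fun x => (HA x).2).
have scalT := scal_einstein ricciE.
have N2 : N%:R = 2 * n%:R :> R by rewrite -addnn natrD; ring.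
rewrite tinner_tcomb tinner_Rmodel // (tinner_Rmodel (Rmodel_curvature HJ) HJ (Rmodel_kaehler HJ)).
rewrite scal_Rmodel // /kappa scalT N2.
have n0 : n%:R != 0 :> R by rewrite pnatr_eq0 -lt0n.
have n7 : n%:R + 7 != 0 :> R by apply/eqP; have := ler0n R n; lra.
have n1 : n%:R + 1 != 0 :> R by rewrite natr1 pnatr_eq0.
have -> : tinner T T = (L2 * (2 * N%:R ^+ 2 + 4 * N%:R) - 2 * (N%:R * L1 ^+ 2)) / 3.
  by rewrite -normT; field.
rewrite N2 !natrM !natrD; field.
by rewrite n0 n1 n7.
Qed.

Lemma defect0_iff_holsec : tinner B B = 0 <-> const_holsec_at J T kappa.
Proof.
case: HTJ => HT HJ HK.
have holsecB x : curv4 B x (Japp J x) (Japp J x) x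
    = curv4 T x (Japp J x) (Japp J x) x - kappa * norm2 x ^+ 2.
  by rewrite curv4_tcomb Rmodel_holsec //; field.
split=> [B0 x _ | holsec].
  have := holsecB x; rewrite curv4E sum4_eq0 => [|a b c d]; last first.
    by rewrite (tinner_eq0 B0) !mul0r.
  lra.
have HB : is_kaehler_curvature J B.
  split=> //; first exact: tcomb_curvature HT (Rmodel_curvature HJ).
  exact: tcomb_kaehler HK (Rmodel_kaehler HJ).
suff B0 : forall a b c d, B a b c d = 0 by apply: sum4_eq0 => a b c d; rewrite B0 mul0r.
apply: kaehler_curv_eq0_of_holsec0 HB _ => x; rewrite holsecB.
case: (pickP (fun i => x i != 0)) => [i xi | x0]; first by rewrite holsec ?subrr //; exists i.
have {}x0 i : x i = 0 by apply/eqP; rewrite -[_ == _]negbK x0.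
rewrite curv4E sum4_eq0 => [|a b c d]; last by rewrite x0 !(mulr0, mul0r).
by rewrite /norm2 big1 => [|i _]; rewrite ?x0 expr0n ?mulr0 ?subrr.
Qed.

End Point.

Unset Implicit Arguments.

Theorem theorem6p4 (R : realFieldType) (n : nat) (M : Type) (p0 : M)
    (J : M -> 'M[R]_(n.*2)) (Rm : M -> curv R n.*2) (L1 L2 : R) :
  (0 < n)%N ->
  (forall p, is_kaehler_curvature (J p) (Rm p)) ->
  (forall p, asymp_harmonic2_at (Rm p) L1 L2) ->
  L1 ^+ 2 - (2 * (n + 1) ^ 2)%:R / (n + 7)%:R * L2 <= 0 /\
  (L1 ^+ 2 - (2 * (n + 1) ^ 2)%:R / (n + 7)%:R * L2 = 0 <->
   forall p, const_holsec_at (J p) (Rm p) (scal (Rm p) / (n * (n + 1))%:R)).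
Proof.
move=> n_gt0 HK HA; have gapE p := asymp_gap_eq n_gt0 (HK p) (HA p).
have k_gt0 : 0 < (3 * (n + 1))%:R / (4 * n * (n + 7))%:R :> R.
  by rewrite divr_gt0 ?ltr0n // !muln_gt0 ?addn_gt0 n_gt0 ?orbT.
split; first by rewrite (gapE p0) oppr_le0 mulr_ge0 ?tinner_ge0 ?ltW.
split=> [gap0 p | holsec].
  apply/(defect0_iff_holsec (HK p)); apply/eqP.
  by move: (gapE p); rewrite gap0 => /esym/eqP; rewrite oppr_eq0 mulf_eq0 gt_eqF.
by rewrite (gapE p0) (defect0_iff_holsec (HK p0)).2 // mulr0 oppr0.
Qed.
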